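(* Let $N=2^L$ ($L\ge1$), channel numbers $r_0,\dots,r_{L-1}\ge1$, an output index $y$, and pairwise distinct covering templates $\mathbf x^{(1)},\dots,\mathbf x^{(M)}\in\mathbb R^s$ be given. Suppose all parameters of the deep ConvNet with ReLU activation and max pooling (the representation parameters $\theta_1,\dots,\theta_M\in\Theta$ and all linear weights $\mathbf a^{l,j,\gamma}$) are drawn from a distribution having a continuous probability density function that vanishes nowhere. Then with positive probability the resulting score function $h^D_y$ can be realized by a shallow ConvNet with ReLU activation and max pooling having a single hidden channel ($Z=1$), i.e. there exist $f_{\tilde\theta_1},\dots,f_{\tilde\theta_M}\in\mathcal F$ and weights for this shallow ConvNet with $\mathcal A(h^S_y)=\mathcal A(h^D_y)$.
   Context: Inputs are $X=(\mathbf x_1,\dots,\mathbf x_N)\in(\mathbb R^s)^N$. Representation functions are taken from a parametric family $\mathcal F=\{f_\theta:\mathbb R^s\to\mathbb R:\theta\in\Theta\}$, $\Theta$ an open subset of a Euclidean space, assumed throughout to satisfy: (continuity) $f_\theta(\mathbf x)$ is continuous in $\theta$ and $\mathbf x$; (non-degeneracy) for any pairwise distinct $\mathbf x^{(1)},\dots,\mathbf x^{(M)}$ there exist $f_{\theta_1},\dots,f_{\theta_M}\in\mathcal F$ with $F=(f_{\theta_d}(\mathbf x^{(i)}))_{i,d}$ non-singular. ReLU activation with max pooling: $\sigma(z)=\max\{0,z\}$, $P=\max$. Shallow ConvNet with $Z$ hidden channels: $h^S_y(X)=\sum_{z=1}^Z a^y_z\,P_{i\in[N]}\big(\sigma(\sum_{d=1}^M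 a^{z,i}_d f_{\theta_d}(\mathbf x_i))\big)$ with $f_{\theta_d}\in\mathcal F$, $\mathbf a^{z,i}\in\mathbb R^M$, $\mathbf a^y\in\mathbb R^Z$. Deep ConvNet: with $f_{\theta_d}\in\mathcal F$, $\mathbf a^{0,j,\gamma}\in\mathbb R^M$ ($j\in[N],\gamma\in[r_0]$), $\mathbf a^{l,j,\gamma}\in\mathbb R^{r_{l-1}}$ ($l\in[L-1]$, $j\in[N/2^l]$, $\gamma\in[r_l]$), $\mathbf a^{L,1,y}\in\mathbb R^{r_{L-1}}$: $u^0_{j,\gamma}=\sigma(\sum_d a^{0,j,\gamma}_d f_{\theta_d}(\mathbf x_j))$; for $l=0,\dots,L-1$, $v^l_{j,\gamma}=P(u^l_{2j-1,\gamma},u^l_{2j,\gamma})$ ($j\in[N/2^{l+1}]$), for $l\ge1$, $u^l_{j,\gamma}=\sigma(\sum_\alpha a^{l,j,\gamma}_\alpha v^{l-1}_{j,\alpha})$ ($j\in[N/2^l]$); $h^D_y(X)=\sum_\alpha a^{L,1,y}_\alpha v^{L-1}_{1,\alpha}$. Grid tensor w.r.t. templates $\mathbf x^{(1)},\dots,\mathbf x^{(M)}$: $\mathcal A(h)_{d_1,\dots,d_N}=h(\mathbf x^{(d_1)},\dots,\mathbf x^{(d_N)})$. Templates are covering if score functions are identified whenever their grid tensors coincide (so equal grid tensors means one network realizes the other's score function). *)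

From HB Require Import structures.
From mathcomp Require Import all_boot all_order all_algebra.
From mathcomp Require Import all_classical all_reals all_analysis.
Set Implicit Arguments. Unset Strict Implicit. Unset Printing Implicit Defensive.
Import Order.TTheory GRing.Theory Num.Theory.
Import numFieldNormedType.Exports.
Local Open Scope classical_set_scope.
Local Open Scope ring_scope.

Section ConvNets.
Variables (R : realType) (s p : nat).

Definition relu (z : R) : R := Num.max 0 z.

(** Parameters of the deep ConvNet are addressed by "codes" (tag, i1, i2, i3):
   - (0, d, k, 0)          : k-th coordinate of theta_d  (d < M, k < p)
   - (l.+1, j, g, a)       : a^{l,j,g}_a, weight of layer l (0 <= l <= L),
                             position j, channel g, input coordinate a
     (all indices 0-based; for the output layer l = L, j = 0 and g = y). *)
Definition code := (nat * nat * nat * nat)%type.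

Definition live_codes (M L Y : nat) (r : nat -> nat) : seq code :=
  flatten [seq [seq (0%N, d, k, 0%N) | k <- iota 0 p] | d <- iota 0 M]
  ++ flatten [seq flatten [seq [seq (1%N, j, g, d) | d <- iota 0 M]
                          | g <- iota 0 (r 0%N)] | j <- iota 0 (2 ^ L)]
  ++ flatten [seq flatten [seq flatten [seq [seq (l.+1, j, g, a) | a <- iota 0 (r l.-1)]
                                       | g <- iota 0 (r l)]
                          | j <- iota 0 (2 ^ (L - l))]
             | l <- iota 1 L.-1]
  ++ flatten [seq [seq (L.+1, 0%N, yy, a) | a <- iota 0 (r L.-1)] | yy <- iota 0 Y].

Definition nparams M L Y r := size (live_codes M L Y r).

Definition param (cs : seq code) (v : 'rV[R]_(size cs)) (c : code) : R :=
  \sum_(i < size cs) (nth (0%N, 0%N, 0%N, 0%N) cs i == c)%:R * v ord0 i.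

Definition theta_of (P : code -> R) (d : nat) : 'rV[R]_p :=
  \row_(k < p) P (0%N, d, val k, 0%N).

(** Deep ConvNet (ReLU activation, size-2 max pooling), all indices 0-based.
   uD l j g = u^l_{j,g};  v^l_{j,g} = max (u^l_{2j,g}) (u^l_{2j+1,g}). *)
Fixpoint deep_u (f : 'rV[R]_p -> 'rV[R]_s -> R) (M : nat) (r : nat -> nat)
    (P : code -> R) (X : seq 'rV[R]_s) (l j g : nat) : R :=
  match l with
  | 0 => relu (\sum_(d < M) P (1%N, j, g, val d) * f (theta_of P d) (nth 0 X j))
  | l'.+1 => relu (\sum_(a < r l') P (l'.+2, j, g, val a) *
                     Num.max (deep_u f M r P X l' j.*2 a) (deep_u f M r P X l' j.*2.+1 a))
  end.

Definition deep_h (f : 'rV[R]_p -> 'rV[R]_s -> R) (M L : nat) (r : nat -> nat)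
    (P : code -> R) (y : nat) (X : seq 'rV[R]_s) : R :=
  \sum_(a < r L.-1) P (L.+1, 0%N, y, val a) *
     Num.max (deep_u f M r P X L.-1 0 a) (deep_u f M r P X L.-1 1 a).

(** Shallow ConvNet with a single hidden channel (Z = 1), ReLU, max pooling
   over all N positions (ReLU outputs are >= 0, so 0 is a neutral element). *)
Definition shallow1_h (f : 'rV[R]_p -> 'rV[R]_s -> R) (M N : nat)
    (th : 'I_M -> 'rV[R]_p) (b : 'I_N -> 'I_M -> R) (c : R) (X : seq 'rV[R]_s) : R :=
  c * \big[Num.max/0]_(i < N) relu (\sum_(d < M) b i d * f (th d) (nth 0 X i)).

Definition grid_input (M N : nat) (xs : 'I_M -> 'rV[R]_s) (ds : N.-tuple 'I_M)
  : seq 'rV[R]_s := [seq xs d | d <- ds].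

Definition param_domain (Theta : set 'rV[R]_p) M L Y r
    (v : 'rV[R]_(nparams M L Y r)) : Prop :=
  forall d : 'I_M, Theta (theta_of (param v) d).

(** The event: the deep score function h^D_y is realized (same grid tensor)
   by a shallow ConvNet with Z = 1. *)
Definition realizable_event (Theta : set 'rV[R]_p) (f : 'rV[R]_p -> 'rV[R]_s -> R)
    M L Y r (y : nat) (xs : 'I_M -> 'rV[R]_s) : set 'rV[R]_(nparams M L Y r) :=
  fun v => exists th : 'I_M -> 'rV[R]_p, (forall d, Theta (th d)) /\
    exists (b : 'I_(2 ^ L) -> 'I_M -> R) (c : R),
      forall ds : (2 ^ L).-tuple 'I_M,
        shallow1_h f th b c (grid_input xs ds) =
        deep_h f M L r (param v) y (grid_input xs ds).

(** Lebesgue integral over R^n, as the iterated integral of a nonnegative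
   (extended-real valued) function of the coordinates 0..n-1. *)
Fixpoint leb_itint (n : nat) (g : (nat -> R) -> \bar R) : \bar R :=
  match n with
  | 0 => g (fun _ => 0)
  | n'.+1 => (\int[@lebesgue_measure R]_x
                leb_itint n' (fun w => g (fun i => if i == n' then x else w i)))%E
  end.

Definition rowof (n : nat) (w : nat -> R) : 'rV[R]_n := \row_(i < n) w i.

Definition prob_dens (n : nat) (rho : 'rV[R]_n -> R) (A : set 'rV[R]_n) : \bar R :=
  leb_itint n (fun w => ((rho (rowof n w)) * (\1_A (rowof n w)))%:E).

End ConvNets.

From Pilot Require Import Defs.
From HB Require Import structures.
From mathcomp Require Import all_boot all_order all_algebra.
From mathcomp Require Import all_classical all_reals all_analysis.
From mathcomp Require Import lra zify.
Import Order.TTheory GRing.Theory Num.Theory.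
Import numFieldNormedType.Exports.
Local Open Scope classical_set_scope.
Local Open Scope ring_scope.

(* With the representation parameters chosen so that the template matrix
   F = (f_{theta_d}(x^(i))) is non-singular and the first-layer weights solving
   F a = -1, every first-layer pre-activation on every template is -1.  By
   continuity this stays negative on a ball of parameters on which the density
   is also bounded below.  There every first-layer ReLU, hence every deeper
   unit, outputs 0, so the deep score function vanishes on the grid and is
   realized by the one-channel shallow network with output weight 0; the ball
   has positive probability. *)

Section IteratedIntegral.
Variable R : realType.

Lemma integral_ge_itv (F : R -> \bar R) (c a b : R) : 0 <= c -> a <= b ->
  (forall x, (0 <= F x)%E) -> (forall x, a < x < b -> (c%:E <= F x)%E) ->
  ((c * (b - a))%:E <= \int[@lebesgue_measure R]_x F x)%E.
Proof.
move=> c0 ab F0 Fab.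
have mI : measurable (`]a, b[%classic : set (measurableTypeR R)).
  exact: measurable_itv.
pose h := scale_nnsfun (indic_nnsfun R mI) c0.
rewrite ge0_integralTE //; apply: le_trans (ereal_sup_ubound _); last first.
  exists h => //= x; rewrite /measurable_realfun.mindic indicE.
  case: (boolP (x \in _)) => [/set_mem|_]; last by rewrite mulr0.
  by rewrite mulr1 /= in_itv /=; exact: Fab.
rewrite -(integralT_nnsfun _ h) /= /measurable_realfun.mindic.
have c_nlt0 : ~ c < 0 by rewrite ltNge c0.
have /= -> := @integralZl_indic _ _ R (@lebesgue_measure R) setT measurableT
  (fun _ => `]a, b[%classic) c (fun c_lt0 => False_ind _ (c_nlt0 c_lt0)) mI.
rewrite integral_indic // setIT.
rewrite -[X in (_ * X)%E]/(lebesgue_measure (`]a, b[%classic : set R)).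
rewrite lebesgue_measure_itv /= lte_fin.
case: ltP => ab'; first by rewrite -EFinD EFinM.
have -> : b = a by apply/eqP; rewrite eq_le ab' ab.
by rewrite subrr mulr0 mule0.
Qed.

Lemma leb_itint_ge0 n (g : (nat -> R) -> \bar R) :
  (forall w, (0 <= g w)%E) -> (0 <= leb_itint n g)%E.
Proof.
elim: n g => [|n IH] g g0 /=; first exact: g0.
by apply: integral_ge0 => x _; apply: IH => w; exact: g0.
Qed.

Lemma leb_itint_ge_cube n (g : (nat -> R) -> \bar R) (w0 : nat -> R)
    (del eps : R) :
  0 < del -> 0 <= eps -> (forall w, (0 <= g w)%E) ->
  (forall w, (forall i, (i < n)%N -> `|w i - w0 i| < del) -> (eps%:E <= g w)%E) ->
  ((eps * del ^+ n)%:E <= leb_itint n g)%E.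
Proof.
elim: n g eps => [|n IH] g eps del0 eps0 g0 g_ge /=.
  by rewrite expr0 mulr1; apply: g_ge.
have := integral_ge_itv
  (fun x => leb_itint n (fun w => g (fun i => if i == n then x else w i)))
  (eps * del ^+ n) (w0 n) (w0 n + del).
rewrite addrAC subrr add0r -mulrA -exprSr; apply => [|||x /andP[x1 x2]].
- by rewrite mulr_ge0 // exprn_ge0 // ltW.
- by rewrite lerDl ltW.
- by move=> x; apply: leb_itint_ge0 => w; exact: g0.
apply: IH => // w wb.
apply: g_ge => i; rewrite ltnS leq_eqVlt.
case: (eqVneq i n) => [-> _|_ /= /wb //].
by rewrite ger0_norm ?subr_ge0 ?ltW // ltrBlDl.
Qed.

Lemma prob_dens_gt0 n (rho : 'rV[R]_n -> R) (A : set 'rV[R]_n) (v0 : 'rV[R]_n)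
    (del eps : R) : 0 < del -> 0 < eps -> (forall v, 0 <= rho v) ->
  (forall v, ball v0 del v -> eps <= rho v /\ A v) -> (0 < prob_dens rho A)%E.
Proof.
move=> del0 eps0 rho_ge0 rho_ball.
pose w0 (i : nat) : R := if insub i is Some i' then v0 ord0 i' else 0.
apply: (@lt_le_trans _ _ (eps * del ^+ n)%:E).
  by rewrite lte_fin mulr_gt0 ?exprn_gt0.
rewrite /prob_dens; apply: (@leb_itint_ge_cube _ _ w0) => //; first exact: ltW.
  by move=> w; rewrite lee_fin mulr_ge0 // indicE; case: (_ \in _).
move=> w w_near.
have [rho_ge inA] : eps <= rho (rowof n w) /\ A (rowof n w).
  apply: rho_ball; split => // i j; rewrite (ord1 i) mxE.
  have := w_near j (ltn_ord j); rewrite /w0 (valK j).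
  by rewrite -ball_normE /= distrC.
by rewrite lee_fin indicE mem_set // mulr1.
Qed.

End IteratedIntegral.

Section MatrixContinuity.
Variable R : realType.

Lemma mxentry_continuous m n (i : 'I_m) (j : 'I_n) :
  continuous (fun A : 'M[R]_(m, n) => A i j).
Proof.
move=> A0 U /nbhs_ballP [e e0 eU]; apply/nbhs_ballP; exists e => // A [_ A0A].
exact: eU (A0A i j).
Qed.

Lemma row_comb_continuous n (K : 'I_n -> R) :
  continuous (fun v : 'rV[R]_n => \sum_(i < n) K i * v ord0 i).
Proof.
apply: (@continuous_big R 'I_n +%R 0 xpredT add_continuous) => i _ v0.
apply: (@cvgM _ _ (nbhs v0)); [exact: cvg_cst | exact: mxentry_continuous].
Qed.

Lemma cvg_mx_entrywise (T : Type) (F : set_system T) {FF : Filter F} m n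
    (G : T -> 'M[R]_(m, n)) (A : 'M[R]_(m, n)) :
  (forall i j, (fun t => G t i j) @ F --> A i j) -> G @ F --> A.
Proof.
move=> GA U /nbhs_ballP [e e0 eU].
have : \forall t \near F, forall i j, ball (A i j) e (G t i j).
  apply: filter_forall => i; apply: filter_forall => j.
  by apply: GA; exact: nbhsx_ballx.
by apply: filterS => t At; apply: eU.
Qed.

End MatrixContinuity.

Section CodedParameters.
Variable R : realType.

Let c0 : Defs.code := (0%N, 0%N, 0%N, 0%N).

Lemma sum_nth_eq_count (cs : seq Defs.code) (c : Defs.code) :
  \sum_(i < size cs) (nth c0 cs i == c)%:R = (count_mem c cs)%:R :> R.
Proof.
rewrite -(big_mkord xpredT (fun i => (nth c0 cs i == c)%:R)).
rewrite -(big_nth _ xpredT (fun x => (x == c)%:R)).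
elim: cs => [|x cs IH]; first by rewrite big_nil.
by rewrite big_cons IH /= natrD.
Qed.

(* A code may occur several times in [cs]; [param] adds up all its
   occurrences, so each one carries an equal share of the target value. *)
Definition param_row (cs : seq Defs.code) (des : Defs.code -> R) :
    'rV[R]_(size cs) :=
  \row_(i < size cs) (des (nth c0 cs i) / (count_mem (nth c0 cs i) cs)%:R).

Lemma param_rowE (cs : seq Defs.code) (des : Defs.code -> R) (c : Defs.code) :
  c \in cs -> param (param_row cs des) c = des c.
Proof.
move=> cs_c; rewrite /param (eq_bigr (fun i : 'I_(size cs) =>
   (nth c0 cs i == c)%:R * (des c / (count_mem c cs)%:R))); last first.
  by move=> i _; rewrite mxE; case: eqP => [->|_]; rewrite ?mul0r ?mul1r.
have count_neq0 : (count_mem c cs)%:R != 0 :> R.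
  by rewrite pnatr_eq0 -lt0n -has_count has_pred1.
by rewrite -big_distrl /= sum_nth_eq_count mulrCA mulfV // mulr1.
Qed.

Lemma param_continuous (cs : seq Defs.code) (c : Defs.code) :
  continuous (fun v : 'rV[R]_(size cs) => param v c).
Proof. exact: row_comb_continuous. Qed.

Lemma theta_of_continuous p (cs : seq Defs.code) (d : nat) :
  continuous (fun v : 'rV[R]_(size cs) => theta_of p (param v) d).
Proof.
move=> v0; apply: (@cvg_mx_entrywise _ _ (nbhs v0)) => i k; rewrite (ord1 i) mxE.
under eq_cvg do rewrite mxE.
exact: param_continuous.
Qed.

End CodedParameters.

Lemma theta_code_live p M L Y r d k : (d < M)%N -> (k < p)%N ->
  (0%N, d, k, 0%N) \in live_codes p M L Y r.
Proof.
move=> ltdM ltkp; rewrite /live_codes mem_cat; apply/orP; left.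
apply/flattenP; exists [seq (0%N, d, k, 0%N) | k <- iota 0 p].
  by apply: (map_f (fun d => [seq (0%N, d, k, 0%N) | k <- iota 0 p]));
    rewrite mem_iota.
by apply: map_f; rewrite mem_iota.
Qed.

Lemma first_layer_code_live p M L Y r j g d :
  (j < 2 ^ L)%N -> (g < r 0%N)%N -> (d < M)%N ->
  (1%N, j, g, d) \in live_codes p M L Y r.
Proof.
move=> ltj ltg ltd; rewrite /live_codes !mem_cat; apply/orP; right; apply/orP; left.
pose block (j : nat) := flatten [seq [seq (1%N, j, g, d) | d <- iota 0 M] | g <- iota 0 (r 0%N)].
apply/flattenP; exists (block j); first by apply: (map_f block); rewrite mem_iota.
apply/flattenP; exists [seq (1%N, j, g, d) | d <- iota 0 M].
  by apply: (map_f (fun g => [seq (1%N, j, g, d) | d <- iota 0 M])); rewrite mem_iota.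
by apply: map_f; rewrite mem_iota.
Qed.

Section DeadFirstLayer.
Variables (R : realType) (s p M : nat) (r : nat -> nat).
Variables (f : 'rV[R]_p -> 'rV[R]_s -> R) (P : Defs.code -> R) (X : seq 'rV[R]_s).
Variable L : nat.
Hypothesis first_layer_lt0 : forall j g, (j < 2 ^ L)%N -> (g < r 0%N)%N ->
  \sum_(d < M) P (1%N, j, g, val d) * f (theta_of p P d) (nth 0 X j) < 0.

Lemma deep_u_eq0 l : (l < L)%N -> forall j g, (j < 2 ^ (L - l))%N -> (g < r l)%N ->
  deep_u f M r P X l j g = 0.
Proof.
elim: l => [|l IH] ltlL j g ltj ltg /=.
  by rewrite subn0 in ltj; rewrite /relu maxEle leNgt first_layer_lt0.
have expL : (2 ^ (L - l) = (2 ^ (L - l.+1)).*2)%N.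
  by rewrite -muln2 -expnSr; congr (2 ^ _)%N; lia.
rewrite big1 /relu ?maxxx // => a _.
rewrite !IH ?maxxx ?mulr0 ?expL ?ltn_double ?leq_double //; lia.
Qed.

Lemma deep_h_eq0 y : (1 <= L)%N -> deep_h f M L r P y X = 0.
Proof.
move=> L_ge1; rewrite /deep_h big1 // => a _.
have expL : (2 ^ (L - L.-1) = 2)%N by rewrite (_ : L - L.-1 = 1)%N //; lia.
by rewrite !deep_u_eq0 ?maxxx ?mulr0 ?expL //; lia.
Qed.

End DeadFirstLayer.

Section DeadParameters.
Set Implicit Arguments. Unset Strict Implicit.
Variables (R : realType) (s p : nat) (Theta : set 'rV[R]_p).
Variable f : 'rV[R]_p -> 'rV[R]_s -> R.
Hypothesis f_continuous : forall (th : 'rV[R]_p) (x : 'rV[R]_s), Theta th ->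
  {for (th, x), continuous (fun q : 'rV[R]_p * 'rV[R]_s => f q.1 q.2)}.
Variables (M L Y : nat) (r : nat -> nat) (xs : 'I_M -> 'rV[R]_s).

Local Notation params := 'rV[R]_(nparams p M L Y r).

Definition first_preact (v : params) (j g : nat) (e : 'I_M) : R :=
  \sum_(d < M) param v (1%N, j, g, val d) * f (theta_of p (param v) d) (xs e).

Lemma realizable_of_first_preact_lt0 (y : nat) (v : params) : (1 <= L)%N ->
  param_domain Theta v ->
  (forall (j : 'I_(2 ^ L)) (g : 'I_(r 0%N)) (e : 'I_M), first_preact v j g e < 0) ->
  realizable_event Theta f y xs v.
Proof.
move=> L_ge1 v_Theta preact_lt0; exists (theta_of p (param v)); split => //.
exists (fun _ _ => 0), 0 => ds; rewrite /shallow1_h mul0r.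
apply/esym/deep_h_eq0 => // j g ltj ltg.
have -> : nth 0 (grid_input xs ds) j = xs (tnth ds (Ordinal ltj)).
  rewrite /grid_input (nth_map (tnth ds (Ordinal ltj))) ?size_tuple //.
  by congr xs; exact: esym (tnth_nth _ _ (Ordinal ltj)).
exact: (preact_lt0 (Ordinal ltj) (Ordinal ltg)).
Qed.

Lemma first_preact_continuous (j g : nat) (e : 'I_M) (v : params) :
  param_domain Theta v -> {for v, continuous (fun w => first_preact w j g e)}.
Proof.
move=> v_Theta.
apply: (@cvg_big R 'I_M +%R 0 xpredT add_continuous _ (nbhs v)) => // d _.
apply: (@cvgM _ _ (nbhs v)); first exact: param_continuous.
have theta_cvg :
    (fun w : params => theta_of p (param w) d) @ v --> theta_of p (param v) d.
  exact: theta_of_continuous.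
apply: (@cvg_comp _ _ _ (fun w => (theta_of p (param w) d, xs e)) (fun q => f q.1 q.2)
  _ (nbhs (theta_of p (param v) d, xs e))); last exact: f_continuous (v_Theta d).
exact: (@cvg_pair _ _ _ (nbhs v) (nbhs (theta_of p (param v) d)) (nbhs (xs e))
  _ _ _ (fun w => theta_of p (param w) d) (fun _ => xs e)
  theta_cvg (cvg_cst _)).
Qed.

Lemma exists_first_preact_eq_m1 (th : 'I_M -> 'rV[R]_p) :
  (forall d, Theta (th d)) -> \det (\matrix_(i < M, d < M) f (th d) (xs i)) != 0 ->
  exists v0 : params, param_domain Theta v0 /\
    forall (j : 'I_(2 ^ L)) (g : 'I_(r 0%N)) (e : 'I_M), first_preact v0 j g e = -1.
Proof.
set F := \matrix_(i < M, d < M) f (th d) (xs i) => th_Theta det_neq0.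
have F_unit : F \in unitmx by rewrite unitmxE unitfE.
pose b := invmx F *m const_mx (-1) : 'cV[R]_M.
have Fb : F *m b = const_mx (-1) by rewrite mulKVmx.
pose des (c : Defs.code) : R := let: (t, i1, i2, i3) := c in
  if t == 0%N then
    (if insub i1 is Some d then
       (if insub i2 is Some k then th d ord0 k else 0) else 0)
  else if t == 1%N then
    (if insub i3 is Some d then b d ord0 else 0)
  else 0.
pose v0 : params := param_row R (live_codes p M L Y r) des.
have theta_v0 (d : 'I_M) : theta_of p (param v0) d = th d.
  apply/rowP => k; rewrite mxE param_rowE ?theta_code_live ?ltn_ord //.
  by rewrite /des /= !valK (ord1 ord0).
exists v0; split => [d|j g e]; first by rewrite theta_v0.
have := congr1 (fun A : 'cV[R]_M => A e ord0) Fb; rewrite !mxE => <-.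
apply: eq_bigr => d _; rewrite mxE param_rowE ?first_layer_code_live ?ltn_ord //.
by rewrite /des /= valK theta_v0 mulrC.
Qed.

End DeadParameters.

Arguments first_preact {R s p} f {M L Y r} xs v j g e.

Theorem claim10 (R : realType) (s p : nat)
  (Theta : set 'rV[R]_p) (f : 'rV[R]_p -> 'rV[R]_s -> R)
  (HTheta : open Theta)
  (Hcont : forall (th : 'rV[R]_p) (x : 'rV[R]_s), Theta th ->
     {for (th, x), continuous (fun q : 'rV[R]_p * 'rV[R]_s => f q.1 q.2)})
  (Hnondeg : forall (m : nat) (z : 'I_m -> 'rV[R]_s), injective z ->
     exists th : 'I_m -> 'rV[R]_p, (forall d, Theta (th d)) /\
       \det (\matrix_(i < m, d < m) f (th d) (z i)) != 0)
  (L : nat) (HL : (1 <= L)%N)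
  (r : nat -> nat) (Hr : forall l, (l < L)%N -> (1 <= r l)%N)
  (Y : nat) (y : 'I_Y)
  (M : nat) (xs : 'I_M -> 'rV[R]_s) (Hxs : injective xs)
  (rho : 'rV[R]_(nparams p M L Y r) -> R)
  (Hrho_ge0 : forall v, 0 <= rho v)
  (Hrho_pos : forall v, param_domain Theta v -> 0 < rho v)
  (Hrho_out : forall v, ~ param_domain Theta v -> rho v = 0)
  (Hrho_cont : forall v, param_domain Theta v -> {for v, continuous rho})
  (Hrho_1 : prob_dens rho setT = 1%E) :
  (0 < prob_dens rho (realizable_event Theta f y xs))%E.
Proof.
have [th [th_Theta det_neq0]] := Hnondeg M xs Hxs.
have [v0 [v0_Theta preact_v0]] :=
  exists_first_preact_eq_m1 L Y r th_Theta det_neq0.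
have rho_v0 := Hrho_pos v0 v0_Theta.
have : \forall v \near v0, rho v0 / 2 < rho v /\ param_domain Theta v /\
    forall (j : 'I_(2 ^ L)) (g : 'I_(r 0%N)) (e : 'I_M), first_preact f xs v j g e < 0.
  near=> v; split; [|split].
  - near: v; apply: (cvgr_gt _ (Hrho_cont v0 v0_Theta)); lra.
  - near: v; apply: filter_forall => d.
    by apply: theta_of_continuous; apply: open_nbhs_nbhs; split => //; exact: v0_Theta.
  - near: v; do 3![apply: filter_forall => ?].
    apply: (cvgr_lt _ (first_preact_continuous Hcont v0_Theta)).
    rewrite preact_v0; lra.
move=> /nbhs_ballP [del del_gt0 near_v0].
apply: (prob_dens_gt0 _ _ _ _ v0 del (rho v0 / 2) del_gt0) => //; first lra.
move=> v /near_v0 [rho_v [v_Theta preact_v]]; split; first exact: ltW.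
exact: realizable_of_first_preact_lt0.
Unshelve. all: by end_near.
Qed.
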